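(* Let $n>1$ be an integer with $F_n=D_n$, and let $p$ be the largest prime divisor of $n$. Then $F_{n/p}=D_{n/p}$ and $F_{np}=D_{np}$.
   Context: For a composite integer $m$, let $d(m)$ denote the largest divisor of $m$ with $1<d(m)<m$. Define $f$ on integers $m>1$ by $f(m)=m-1$ if $m$ is prime and $f(m)=m-d(m)$ if $m$ is composite. Let $f^{(0)}(m)=m$, $f^{(i)}=f\circ f^{(i-1)}$. Define $F_m=\{m,f(m),f^{(2)}(m),\dots,1\}$, the set of iterates of $f$ from $m$ up to and including the first occurrence of $1$ (with $F_1=\{1\}$), and let $D_m$ be the set of positive divisors of $m$. *)

From mathcomp Require Import all_boot.
Set Implicit Arguments. Unset Strict Implicit. Unset Printing Implicit Defensive.

(* d(m): the largest divisor d of m with 1 < d < m (meaningful for composite m;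
   equals 0 when no such divisor exists). *)
Definition dlarge (m : nat) : nat := \max_(d < m | (1 < d) && (d %| m)) d.

Definition fstep (m : nat) : nat := if prime m then m.-1 else m - dlarge m.

(* F_m: the iterates f^(i)(m), up to and including the first occurrence of 1. *)
Definition inF (m x : nat) : Prop :=
  exists i, iter i fstep m = x /\ (forall j, j < i -> iter j fstep m != 1).

Definition F_eq_D (m : nat) : Prop :=
  forall x, inF m x <-> (0 < x) && (x %| m).

(* Since f(m) = (m/q)(q - 1) with q the least prime factor of m, f(x p^j) = f(x) p^j whenever
   all prime factors of x > 1 lie below the prime p.  Writing n = m p^(k+1) with p the largest
   prime factor of n, the orbit of x p^(j+1) is therefore (orbit of x) p^(j+1) followed by the
   orbit of (p - 1) p^j, and by induction on j the members of F_n prime to p form F_(p-1).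
   As F_n = D_n these are the divisors of m, so F_(p-1) = D_m and m = p - 1, the largest
   element of both sides.  The same decomposition propagates F_(p-1) = D_(p-1) to
   F_((p-1) p^j) = D_((p-1) p^j) for all j, which covers n/p and np. *)
From mathcomp Require Import all_boot zify.

Lemma dlarge_pdiv m : 1 < m -> ~~ prime m -> dlarge m = m %/ pdiv m.
Proof.
move=> m_gt1 m_nprime; have q_gt1 := prime_gt1 (pdiv_prime m_gt1).
apply/eqP; rewrite eqn_leq; apply/andP; split.
  apply/bigmax_leqP => -[d /= d_lt_m] /andP[d_gt1 /dvdnP[e m_eq]].
  have e_gt1 : 1 < e by nia.
  have q_le_e : pdiv m <= e by apply: pdiv_min_dvd; rewrite // m_eq dvdn_mulr.
  have -> : d = m %/ e by rewrite m_eq mulKn //; lia.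
  exact: leq_div2l.
have q_lt_m : pdiv m < m.
  rewrite ltn_neqAle pdiv_leq 1?ltnW // andbT.
  by apply: contraNneq m_nprime => <-; apply: pdiv_prime.
have mq_lt_m : m %/ pdiv m < m by rewrite ltn_Pdiv // ltnW.
apply: (leq_bigmax_cond (Ordinal mq_lt_m)) => /=.
by rewrite dvdn_div ?pdiv_dvd // andbT ltn_divRL ?pdiv_dvd //; lia.
Qed.

Lemma fstepE m : 1 < m -> fstep m = m %/ pdiv m * (pdiv m).-1.
Proof.
move=> m_gt1; rewrite -subn1 mulnBr muln1 divnK ?pdiv_dvd //.
rewrite /fstep; case: ifP => [m_prime | /negbT m_nprime].
  by rewrite pdiv_id // divnn ltnW // subn1.
by rewrite dlarge_pdiv.
Qed.

Lemma fstep1 : fstep 1 = 1.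
Proof. by rewrite /fstep /dlarge big1 // => -[[|]]. Qed.

Lemma fstep_le m : fstep m <= m.
Proof. by rewrite /fstep; case: ifP => _; lia. Qed.

Lemma fstep_lt m : 1 < m -> fstep m < m.
Proof.
move=> m_gt1; rewrite fstepE //.
have q_gt1 := prime_gt1 (pdiv_prime m_gt1); have q_dvd := pdiv_dvd m.
have mq_gt0 : 0 < m %/ pdiv m by rewrite divn_gt0 ?pdiv_gt0 ?pdiv_leq //; lia.
have := divnK q_dvd; nia.
Qed.

Definition reach x y := exists i, iter i fstep x = y.

Lemma iter_fstep1 i : iter i fstep 1 = 1.
Proof. by elim: i => //= i ->; rewrite fstep1. Qed.

Lemma inF_reach m x : inF m x <-> reach m x.
Proof.
split=> [[i [<- _]] | [i]]; first by exists i.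
elim/ltn_ind: i => i IH m_i.
have [/existsP[j /eqP m_j] | no_one] := boolP [exists j : 'I_i, iter j fstep m == 1].
  apply: (IH j (ltn_ord j)).
  by rewrite m_j -m_i -(subnK (ltnW (ltn_ord j))) iterD m_j iter_fstep1.
by exists i; split=> // j j_lt; move/existsPn: no_one => /(_ (Ordinal j_lt)).
Qed.

Lemma reachS x y : reach x y <-> y = x \/ reach (fstep x) y.
Proof.
split=> [[[|i] <-] | [-> | [i <-]]]; first by left.
- by right; exists i; rewrite iterSr.
- by exists 0.
- by exists i.+1; rewrite iterSr.
Qed.

Lemma reach1 y : reach 1 y <-> y = 1.
Proof. by split=> [[i <-] | ->]; [rewrite iter_fstep1 | exists 0]. Qed.

Lemma reach_le x y : reach x y -> y <= x.
Proof. by case=> i <-; elim: i => //= i; apply: leq_trans (fstep_le _). Qed.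

Lemma F_eq_D_reach m : F_eq_D m <-> forall y, reach m y <-> 0 < y /\ y %| m.
Proof.
split=> F_D y; first by rewrite -inF_reach F_D; split=> [/andP | [-> ->]].
by rewrite inF_reach F_D; split=> [[-> ->] | /andP].
Qed.

Lemma reach_eq_divisors {x m} :
  0 < m -> (forall y, reach x y <-> 0 < y /\ y %| m) -> x = m.
Proof.
move=> m_gt0 reach_D; apply/eqP; rewrite eqn_leq.
have [x_gt0 x_dvd] := proj1 (reach_D x) (ex_intro _ 0 erefl).
by rewrite dvdn_leq //= reach_le //; apply/reach_D.
Qed.

Section PrimeBelow.

Context {p : nat} (p_prime : prime p).

Let p_gt1 : 1 < p. Proof. exact: prime_gt1. Qed.

Let mulX_gt1 {x} j : 1 < x -> 1 < x * p ^ j.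
Proof. by move=> x_gt1; rewrite (leq_trans x_gt1) ?leq_pmulr ?expn_gt0 ?prime_gt0. Qed.

Lemma pdiv_mulX x j : 1 < x -> pdiv x <= p -> pdiv (x * p ^ j) = pdiv x.
Proof.
move=> x_gt1 q_le_p; have r_prime := pdiv_prime (mulX_gt1 j x_gt1).
apply/eqP; rewrite eqn_leq pdiv_min_dvd ?prime_gt1 ?pdiv_prime ?dvdn_mulr ?pdiv_dvd //=.
have := pdiv_dvd (x * p ^ j); rewrite Euclid_dvdM // => /orP[r_dvd | r_dvd].
  exact: pdiv_min_dvd (prime_gt1 r_prime) r_dvd.
by move: r_dvd; rewrite Euclid_dvdX // dvdn_prime2 // => /andP[/eqP ->].
Qed.

Lemma fstep_mulX x j : 1 < x -> pdiv x <= p -> fstep (x * p ^ j) = fstep x * p ^ j.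
Proof.
move=> x_gt1 q_le_p.
by rewrite !fstepE ?mulX_gt1 // pdiv_mulX // -divn_mulAC ?pdiv_dvd // mulnAC.
Qed.

Lemma fstep_pfactor j : fstep (p ^ j.+1) = p.-1 * p ^ j.
Proof.
rewrite fstepE ?pdiv_pfactor //; first by rewrite expnSr mulnK ?prime_gt0 // mulnC.
by rewrite -(exp1n j.+1) ltn_exp2r.
Qed.

Lemma pnat_lt x : 0 < x -> x < p -> [pred r | r < p].-nat x.
Proof.
move=> x_gt0 x_lt_p; apply/pnatP=> // r _ r_dvd.
exact: leq_ltn_trans (dvdn_leq x_gt0 r_dvd) x_lt_p.
Qed.

Lemma pnat_lt_pred : [pred r | r < p].-nat p.-1.
Proof. by apply: pnat_lt; lia. Qed.

Lemma pnat_lt_ndvd {y} : [pred r | r < p].-nat y -> ~~ (p %| y).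
Proof.
move=> y_pnat; apply/negP=> p_dvd; have /andP[y_gt0 _] := y_pnat.
by have /(pnatP _ y_gt0)/(_ p p_prime p_dvd) := y_pnat; rewrite inE ltnn.
Qed.

Lemma pnat_lt_pdiv {x} : 1 < x -> [pred r | r < p].-nat x -> pdiv x < p.
Proof.
by move=> x_gt1 /(pnatP _ (ltnW x_gt1)); apply; rewrite ?pdiv_prime ?pdiv_dvd.
Qed.

Lemma pnat_fstep x : [pred r | r < p].-nat x -> [pred r | r < p].-nat (fstep x).
Proof.
case: (ltngtP x 1) => [|x_gt1 x_pnat|->]; [by case: x | | by rewrite fstep1].
have q_gt1 := prime_gt1 (pdiv_prime x_gt1); have q_lt_p := pnat_lt_pdiv x_gt1 x_pnat.
by rewrite fstepE // pnatM pnat_div ?pdiv_dvd //= pnat_lt //; lia.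
Qed.

Lemma reach_pnat {x y} :
  [pred r | r < p].-nat x -> reach x y -> [pred r | r < p].-nat y.
Proof. by move=> x_pnat [i <-]; elim: i => //= i; apply: pnat_fstep. Qed.

Lemma reach_mulX x j y : [pred r | r < p].-nat x ->
  reach (x * p ^ j.+1) y <->
  (exists2 z, reach x z & y = z * p ^ j.+1) \/ reach (p.-1 * p ^ j) y.
Proof.
elim/ltn_ind: x y => x IH y x_pnat.
case: (ltngtP x 1) => [x_lt1 | x_gt1 | ->]; first by case: x x_lt1 x_pnat {IH}.
  have q_le_p := ltnW (pnat_lt_pdiv x_gt1 x_pnat).
  rewrite reachS fstep_mulX // IH ?fstep_lt ?pnat_fstep //.
  split=> [[-> | [[z fx_z ->] | p1X_y]] | [[z /reachS[-> | fx_z] ->] | p1X_y]].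
  - by left; exists x => //; exists 0.
  - by left; exists z => //; apply/reachS; right.
  - by right.
  - by left.
  - by right; left; exists z.
  - by right; right.
rewrite mul1n reachS fstep_pfactor.
split=> [[-> | p1X_y] | [[z /reach1 -> ->] | p1X_y]].
- by left; exists 1; rewrite ?mul1n //; exists 0.
- by right.
- by left; rewrite mul1n.
- by right.
Qed.

Lemma reach_mulX_ndvd x j y : [pred r | r < p].-nat x ->
  reach (x * p ^ j.+1) y /\ ~~ (p %| y) <-> reach p.-1 y.
Proof.
have pX_dvd z i : p %| z * p ^ i.+1 by rewrite dvdn_mull ?dvdn_exp.
elim: j x => [|j IH] x x_pnat; rewrite reach_mulX //.
  rewrite expn0 muln1; split=> [[[[z _ ->] | //] p_ndvd] | p1_y].
    by rewrite pX_dvd in p_ndvd.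
  by split; [right | exact: pnat_lt_ndvd (reach_pnat pnat_lt_pred p1_y)].
split=> [[[[z _ ->] | p1X_y] p_ndvd] | /(IH _ pnat_lt_pred)[p1X_y p_ndvd]].
- by rewrite pX_dvd in p_ndvd.
- exact/(IH _ pnat_lt_pred).
- by split=> //; right.
Qed.

Lemma dvdn_mulX_ndvd m j z : ~~ (p %| m) ->
  (z %| m * p ^ j) && ~~ (p %| z) = (z %| m).
Proof.
move=> p_ndvd_m; apply/idP/idP => [/andP[z_dvd p_ndvd_z] | z_dvd].
  by rewrite -(Gauss_dvdl _ (_ : coprime z (p ^ j))) // coprimeXr // coprime_sym prime_coprime.
by rewrite dvdn_mulr //=; apply: contra p_ndvd_m => /dvdn_trans; apply.
Qed.

Lemma dvdn_mulX_split {m j y} : ~~ (p %| m) ->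
  y %| m * p ^ j.+1 -> p ^ j.+1 %| y \/ y %| m * p ^ j.
Proof.
move=> p_ndvd_m y_dvd; have [-> | m_gt0] := posnP m; first by right; rewrite mul0n dvdn0.
have y_gt0 : 0 < y by apply: dvdn_gt0 y_dvd; rewrite muln_gt0 m_gt0 expn_gt0 prime_gt0.
case: (ltnP j (logn p y)) => [j_lt | e_le_j]; first by left; rewrite pfactor_dvdn.
right; have [y' y'_coprime y_eq] := pfactor_coprime p_prime y_gt0.
have y'_dvd : y' %| m.
  rewrite -(Gauss_dvdl _ (_ : coprime y' (p ^ j.+1))); last by rewrite coprimeXr // coprime_sym.
  by apply: dvdn_trans _ y_dvd; rewrite y_eq dvdn_mulr.
by rewrite y_eq dvdn_mul ?dvdn_exp2l.
Qed.

Lemma F_eq_D_predX j : F_eq_D p.-1 -> F_eq_D (p.-1 * p ^ j).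
Proof.
move=> /F_eq_D_reach p1_F_D; apply/F_eq_D_reach.
elim: j => [|j IH] y; first by rewrite muln1.
have pX_gt0 : 0 < p ^ j.+1 by rewrite expn_gt0 prime_gt0.
rewrite reach_mulX ?pnat_lt_pred // IH; split.
- case=> [[z /p1_F_D[z_gt0 z_dvd] ->] | [y_gt0 y_dvd]].
    by rewrite muln_gt0 z_gt0 pX_gt0 dvdn_mul.
  by split; rewrite // (dvdn_trans y_dvd) // expnSr mulnA dvdn_mulr.
- move=> [y_gt0 y_dvd].
  case: (dvdn_mulX_split (pnat_lt_ndvd pnat_lt_pred) y_dvd) => [/dvdnP[z y_eq] | ?]; last by right.
  left; exists z => //; apply/p1_F_D.
  by move: y_gt0 y_dvd; rewrite y_eq muln_gt0 pX_gt0 andbT dvdn_pmul2r.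
Qed.

End PrimeBelow.

Lemma max_pdiv_factor {n} : 1 < n ->
  exists k m, n = m * max_pdiv n ^ k.+1 /\ [pred r | r < max_pdiv n].-nat m.
Proof.
move=> n_gt1; set p := max_pdiv n; have p_prime : prime p := max_pdiv_prime n_gt1.
have n_gt0 : 0 < n by apply: ltnW.
have [m p_coprime n_eq] := pfactor_coprime p_prime n_gt0.
have : 0 < logn p n by rewrite logn_gt0 mem_primes p_prime n_gt0 max_pdiv_dvd.
case: (logn p n) n_eq => // k n_eq _; exists k, m; split=> //.
have m_gt0 : 0 < m by move: n_gt0; rewrite n_eq muln_gt0 => /andP[].
apply/pnatP=> // r r_prime r_dvd; rewrite inE ltn_neqAle.
rewrite max_pdiv_max ?mem_primes ?r_prime ?n_gt0 ?n_eq ?dvdn_mulr // andbT.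
by apply: contraTneq p_coprime => r_eq; rewrite prime_coprime // -r_eq r_dvd.
Qed.

Theorem proposition5 (n : nat) (hn : 1 < n) (hF : F_eq_D n) :
  F_eq_D (n %/ max_pdiv n) /\ F_eq_D (n * max_pdiv n).
Proof.
have p_prime : prime (max_pdiv n) := max_pdiv_prime hn.
have [k [m [n_eq m_pnat]]] := max_pdiv_factor hn.
move: (max_pdiv n) p_prime n_eq m_pnat => p p_prime n_eq m_pnat.
have p_gt0 := prime_gt0 p_prime.
have p_ndvd_m := pnat_lt_ndvd p_prime m_pnat.
have p1_D_m y : reach p.-1 y <-> 0 < y /\ y %| m.
  rewrite -(reach_mulX_ndvd p_prime m k y m_pnat) -n_eq.
  move/F_eq_D_reach: hF ->; rewrite -(dvdn_mulX_ndvd p_prime m k.+1 y p_ndvd_m) -n_eq.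
  by split=> [[[-> ->] ->] | [-> /andP[-> ->]]].
have m_gt0 : 0 < m by case/andP: m_pnat.
have m_eq : p.-1 = m := reach_eq_divisors m_gt0 p1_D_m.
have p1_F_D : F_eq_D p.-1 by apply/F_eq_D_reach => y; rewrite p1_D_m m_eq.
rewrite n_eq -m_eq; split.
  by rewrite expnSr mulnA mulnK //; exact: F_eq_D_predX.
by rewrite -mulnA -expnSr; exact: F_eq_D_predX.
Qed.
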